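(* Let $q$ be a power of an odd prime, let $n$ be an even positive integer, and let $k$ be a divisor of $q-1$. Then $(q^n,k)$ does not give a $3$-design.
   Context: For a prime power $Q\equiv1\pmod 4$ (note $q^n\equiv 1\pmod 4$ here) the group $\mathrm{PSL}(2,Q)$ acts on $\mathrm{PG}(1,Q)=\mathbb{F}_Q\cup\{\infty\}$ by linear fractional transformations $z\mapsto (az+b)/(cz+d)$ with $ad-bc$ a nonzero square in $\mathbb{F}_Q$. For a divisor $k$ of $Q-1$, ''$(Q,k)$ gives a $3$-design'' means that the $\mathrm{PSL}(2,Q)$-orbit of the unique subgroup of order $k$ of $\mathbb{F}_Q^\times$ is the block set of a $3$-$(Q+1,k,\lambda)$ design for some positive integer $\lambda$. *)

From mathcomp Require Import all_boot all_order all_algebra all_field.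
Set Implicit Arguments. Unset Strict Implicit. Unset Printing Implicit Defensive.
Import GRing.Theory.
Local Open Scope ring_scope.

(* The projective line PG(1,F) = F ∪ {∞}; None stands for ∞. *)
Definition pline (F : finFieldType) := option F.

Definition lft (F : finFieldType) (g : F * F * F * F) (z : option F) : option F :=
  let: (a, b, c, d) := g in
  match z with
  | None => if c == 0 then None else Some (a / c)
  | Some x => if c * x + d == 0 then None else Some ((a * x + b) / (c * x + d))
  end.

(* (a,b,c,d) represents an element of PSL(2,F): ad - bc is a nonzero square. *)
Definition is_psl (F : finFieldType) (g : F * F * F * F) : bool :=
  let: (a, b, c, d) := g in
  (a * d - b * c != 0) && [exists y : F, y ^+ 2 == a * d - b * c].

(* The unique subgroup of order k of F^× (k | #|F| - 1): the k-th roots of unity. *)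
Definition mu_sub (F : finFieldType) (k : nat) : {set F} :=
  [set x : F | (x != 0) && (x ^+ k == 1)].

Definition psl_orbit (F : finFieldType) (k : nat) : {set {set option F}} :=
  [set [set lft g z | z in [set Some x | x in mu_sub F k]]
     | g in [set g : F * F * F * F | is_psl g]].

Definition gives_3design (F : finFieldType) (k : nat) : Prop :=
  exists lambda : nat, (0 < lambda)%N /\
    forall T : {set option F}, #|T| = 3%N ->
      #|[set X in psl_orbit F k | T \subset X]| = lambda.

From mathcomp Require Import all_boot all_order all_algebra all_field.
From mathcomp Require Import cyclic ring zify.
Set Implicit Arguments.
Unset Strict Implicit.
Unset Printing Implicit Defensive.
Import GRing.Theory.
Local Open Scope ring_scope.

(* Since [n] is even, [2 (q - 1)] divides [q^n - 1], so every element of the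
   subfield [GF(q)] is a square in [F].  A linear fractional transformation
   [z |-> (a z + b)/(c z + d)] multiplies the cyclic difference product
   [(x1 - x2)(x2 - x3)(x3 - x1)] by [(ad - bc)^3] divided by a square.  The base
   block lies in [GF(q)] and elements of PSL(2,F) have square determinant, so
   every triple of finite points of a block has a square difference product.
   The triple [{0, t, -t}] with [2 t^3] a non-square therefore lies in no block,
   which forces [λ = 0]. *)

Lemma dvdn_double_pred_predX (q n : nat) :
  odd q -> ~~ odd n -> ((q.-1).*2 %| (q ^ n).-1)%N.
Proof.
move=> q_odd n_even.
rewrite -(odd_double_half n) (negbTE n_even) add0n -[n./2.*2]mul2n expnM.
apply: dvdn_trans (dvdn_pred_predX _ _).
case: q q_odd => [|q] // q_even.
have -> : ((q.+1 ^ 2).-1 = q * q.+2)%N by rewrite !expnS expn0 /=; lia.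
by rewrite -muln2 dvdn_mul // dvdn2 /= negbK.
Qed.

Lemma exprBn_pchar (R : comNzRingType) (x y : R) n :
  [pchar R].-nat n -> (x - y) ^+ n = x ^+ n - y ^+ n.
Proof. by move=> charRn; rewrite exprDn_pchar // exprNn_pchar. Qed.

Section Squares.

Variable F : fieldType.

Definition is_square (x : F) : Prop := exists y, y ^+ 2 = x.

Lemma is_squareM x y : is_square x -> is_square y -> is_square (x * y).
Proof. by move=> [u <-] [v <-]; exists (u * v); rewrite exprMn. Qed.

Lemma is_squareX x n : is_square x -> is_square (x ^+ n).
Proof. by move=> [u <-]; exists (u ^+ n); rewrite -!exprM mulnC. Qed.

Lemma is_square_mulr_sqr x y : y != 0 -> is_square (x * y ^+ 2) -> is_square x.
Proof.
by move=> y_neq0 [u hu]; exists (u / y); rewrite expr_div_n hu mulfK ?expf_neq0.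
Qed.

Definition diff3 (x1 x2 x3 : F) := (x1 - x2) * (x2 - x3) * (x3 - x1).

Lemma diff3_mobius (a b c d u1 u2 u3 : F) :
  c * u1 + d != 0 -> c * u2 + d != 0 -> c * u3 + d != 0 ->
  diff3 ((a * u1 + b) / (c * u1 + d)) ((a * u2 + b) / (c * u2 + d))
        ((a * u3 + b) / (c * u3 + d))
    * ((c * u1 + d) * (c * u2 + d) * (c * u3 + d)) ^+ 2
  = (a * d - b * c) ^+ 3 * diff3 u1 u2 u3.
Proof. by move=> D1 D2 D3; rewrite /diff3; field; rewrite D1 D2 D3. Qed.

End Squares.

Section FiniteFieldSquares.

Variable F : finFieldType.

Lemma exists_nonsquare : 2%:R != 0 :> F -> exists nu : F, ~ is_square nu.
Proof.
move=> two_neq0; pose S := [set y ^+ 2 | y in [set: F]].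
have /subsetPn[nu _ nu_notin_S] : ~~ ([set: F] \subset S).
  apply/negP => /subset_leq_card le_FS.
  have /imset_injP sqr_inj : #|S| == #|[set: F]|.
    by rewrite eqn_leq leq_imset_card le_FS.
  have := sqr_inj 1 (-1) (in_setT _) (in_setT _).
  rewrite sqrrN => /(_ erefl) /eqP; rewrite -subr_eq0 opprK.
  by rewrite (negPf two_neq0).
exists nu => -[y sqr_y]; apply: (negP nu_notin_S); rewrite -sqr_y.
by apply: imset_f; rewrite in_setT.
Qed.

Lemma exists_prim_root : exists w : F, (#|F|.-1).-primitive_root w.
Proof.
have F_gt1 := finNzRing_gt1 F.
have /hasP[w _ prim_w] : has (#|F|.-1).-primitive_root (enum (predC1 (0 : F))).
  apply: has_prim_root; rewrite ?enum_uniq // -?cardE ?cardC1 //.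
    by rewrite -ltnS prednK // ltnW.
  apply/allP => x; rewrite mem_enum => /= x_neq0; rewrite unity_rootE.
  by apply/eqP/(mulfI x_neq0); rewrite mulr1 -exprS prednK ?expf_card // ltnW.
by exists w.
Qed.

(* Writing [z = w^i] for a generator [w], [z^m = 1] forces [i] to be even. *)
Lemma unity_root_is_square (m : nat) (z : F) :
  (m.*2 %| #|F|.-1)%N -> z ^+ m = 1 -> is_square z.
Proof.
move=> dvd_m2 zm1.
have F_gt1 := finNzRing_gt1 F.
have m_gt0 : (0 < m)%N.
  rewrite lt0n; apply: contraTneq dvd_m2 => ->.
  by rewrite double0 dvd0n -lt0n -ltnS prednK // ltnW.
have [w prim_w] := exists_prim_root.
have z_neq0 : z != 0.
  by apply/eqP => z0; move/eqP: zm1; rewrite z0 expr0n gtn_eqF // eq_sym oner_eq0.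
have zN1 : z ^+ #|F|.-1 = 1.
  by apply/(mulfI z_neq0); rewrite mulr1 -exprS prednK ?expf_card // ltnW.
have [i z_eq] := prim_rootP prim_w zN1.
have : (#|F|.-1 %| i * m)%N by rewrite (prim_order_dvd prim_w) exprM -z_eq zm1.
move/(dvdn_trans dvd_m2); rewrite -muln2 mulnC dvdn_pmul2r // => /dvdnP[j i_eq].
by exists (w ^+ j); rewrite z_eq i_eq exprM.
Qed.

Lemma fixed_is_square (q : nat) (z : F) :
  ((q.-1).*2 %| #|F|.-1)%N -> z ^+ q = z -> is_square z.
Proof.
move=> dvd_q2 zq.
have [-> | z_neq0] := eqVneq z 0; first by exists 0; rewrite expr0n.
apply: unity_root_is_square dvd_q2 _; apply: (mulfI z_neq0).
case: q zq => [|q] zq; last by rewrite mulr1 -exprS.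
by rewrite expr0 in zq; rewrite -zq !mulr1.
Qed.

End FiniteFieldSquares.

Lemma mu_sub_unity_root (F : finFieldType) (k m : nat) (u : F) :
  (k %| m)%N -> u \in mu_sub F k -> u ^+ m = 1.
Proof.
move=> /dvdnP[j ->]; rewrite inE => /andP[_ /eqP uk1].
by rewrite mulnC exprM uk1 expr1n.
Qed.

Lemma mu_sub_subr_is_square (F : finFieldType) (p e k : nat) :
  p \in [pchar F] -> (k %| (p ^ e).-1)%N ->
  ((p ^ e).-1.*2 %| #|F|.-1)%N ->
  {in mu_sub F k &, forall u v, is_square (u - v)}.
Proof.
move=> charFp k_dvd dvd_q2 u v mu_u mu_v.
have q_gt0 : (0 < p ^ e)%N by rewrite expn_gt0 prime_gt0 ?(pcharf_prime charFp).
have fixed w : w \in mu_sub F k -> w ^+ (p ^ e) = w.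
  by move/(mu_sub_unity_root k_dvd) => w1; rewrite -(prednK q_gt0) exprS w1 mulr1.
apply: (fixed_is_square dvd_q2).
rewrite exprBn_pchar ?fixed // (eq_pnat _ (pcharf_eq charFp)) pnatX.
by rewrite pnat_id ?(pcharf_prime charFp).
Qed.

Lemma lft_Some_inv (F : finFieldType) (a b c d u x : F) :
  lft (a, b, c, d) (Some u) = Some x ->
  c * u + d != 0 /\ x = (a * u + b) / (c * u + d).
Proof. by rewrite /=; case: ifP => // /negbT D [<-]. Qed.

Lemma psl_orbit_diff3_is_square (F : finFieldType) (k : nat) X (x1 x2 x3 : F) :
  {in mu_sub F k &, forall u v, is_square (u - v)} ->
  X \in psl_orbit F k -> Some x1 \in X -> Some x2 \in X -> Some x3 \in X ->
  is_square (diff3 x1 x2 x3).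
Proof.
move=> sq_mu /imsetP[[[[a b] c] d]].
rewrite inE => /andP[_ /existsP[y /eqP det_y]] ->.
have block_mem x :
    Some x \in [set lft (a, b, c, d) z | z in [set Some u | u in mu_sub F k]] ->
  exists2 u, u \in mu_sub F k & c * u + d != 0 /\ x = (a * u + b) / (c * u + d).
  by case/imsetP => _ /imsetP[u mu_u ->] /esym /lft_Some_inv; exists u.
move=> /block_mem[u1 mu1 [D1 ->]] /block_mem[u2 mu2 [D2 ->]].
move=> /block_mem[u3 mu3 [D3 ->]].
apply: (is_square_mulr_sqr (y := (c * u1 + d) * (c * u2 + d) * (c * u3 + d))).
  by rewrite !mulf_neq0.
rewrite diff3_mobius //; apply: is_squareM; first by apply/is_squareX; exists y.
by rewrite /diff3; do !apply: is_squareM; apply: sq_mu.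
Qed.

Lemma not_gives_3design (F : finFieldType) (k : nat) :
  2%:R != 0 :> F -> {in mu_sub F k &, forall u v, is_square (u - v)} ->
  ~ gives_3design F k.
Proof.
move=> two_neq0 sq_mu [lam [lam_gt0 blocks_through]].
have [nu nu_nonsq] := exists_nonsquare two_neq0.
have nu_neq0 : nu != 0.
  by apply: contra_not_neq nu_nonsq => ->; exists 0; rewrite expr0n.
pose t := nu / 2%:R.
have t_neq0 : t != 0 by rewrite mulf_neq0 ?invr_eq0.
pose T := Some 0 |: [set Some t; Some (- t)].
have card_T : #|T| = 3%N.
  have t_neq_Nt : t != - t by rewrite -addr_eq0 -mulr2n -mulr_natr mulf_neq0.
  rewrite cardsU1 cards2 !inE !(inj_eq (@Some_inj _)) t_neq_Nt.
  by rewrite !(eq_sym 0) oppr_eq0 (negPf t_neq0).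
have /card_gt0P[X] : (0 < #|[set X in psl_orbit F k | T \subset X]|)%N.
  by rewrite blocks_through.
rewrite inE => /andP[X_block /subsetP T_sub_X].
apply: nu_nonsq (is_square_mulr_sqr t_neq0 _).
have -> : nu * t ^+ 2 = diff3 0 t (- t) by rewrite /diff3 /t; field.
apply: psl_orbit_diff3_is_square sq_mu X_block _ _ _; apply: T_sub_X.
- exact: setU11.
- exact/setU1r/set21.
- exact/setU1r/set22.
Qed.

Local Close Scope ring_scope.

Theorem proposition3p5 (q n k : nat) :
  (exists p e : nat, [/\ prime p, odd p, (0 < e)%N & q = p ^ e]) ->
  (0 < n)%N -> ~~ odd n ->
  (k %| q - 1)%N ->
  forall F : finFieldType, #|F| = (q ^ n)%N ->
  ~ gives_3design F k.
Proof.
move=> [p [e [p_pr p_odd _ ->]]] _ n_even; rewrite subn1 => k_dvd F card_F.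
have charFp : p \in [pchar F]%R.
  by apply: (@card_finPcharP _ _ (e * n)); rewrite ?expnM.
apply: not_gives_3design.
  apply: contraTneq p_odd => two0.
  have : 2 \in [pchar F]%R by apply/andP; split; last apply/eqP.
  by rewrite (pcharf_eq charFp) => /eqP <-.
apply: mu_sub_subr_is_square charFp k_dvd _.
by rewrite card_F dvdn_double_pred_predX // oddX p_odd orbT.
Qed.
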